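(* Let $V$ and $H$ be real Hilbert spaces with scalar products $(\cdot,\cdot)_V$, $(\cdot,\cdot)_H$ and norms $\|\cdot\|_V$, $\|\cdot\|_H$, and let $\gamma:V\to H$ be a continuous, linear and compact operator. Let $\lambda_1\le\lambda_2\le\dots$ be the eigenvalues of the problem: find $\lambda\in\mathbb{R}$, $u\in V$, $u\ne0$, with $(u,v)_V=\lambda(\gamma u,\gamma v)_H$ for all $v\in V$, and let $C_\gamma$ be the smallest constant such that $\|\gamma v\|_H\le C_\gamma\|v\|_V$ for all $v\in V$. Let $u_*\in V$ and $\lambda_*\in\mathbb{R}$ be arbitrary and let $w\in V$ satisfy $(w,v)_V=(u_*,v)_V-\lambda_*(\gamma u_*,\gamma v)_H$ for all $v\in V$. Assume that $$\left|\frac{\lambda_1-\lambda_*}{\lambda_1}\right|\le\left|\frac{\lambda_i-\lambda_*}{\lambda_i}\right|\quad\forall i=1,2,\dots.$$ Further let $A\ge0$ and $B\ge0$ satisfy $B<\lambda_*\|\gamma u_*\|_H$ and $\|w\|_V\le A+C_\gamma B$. Then $$X_2^2\le\lambda_1\quad\text{and}\quad C_\gamma\le 1/X_2,$$ where $$X_2=\tfrac12\left(-\alpha+\sqrt{\alpha^2+4(\lambda_*-\beta)}\right),\qquad \alpha=\frac{A}{\|\gamma u_*\|_H},\qquad \beta=\frac{B}{\|\gamma u_*\|_H}.$$ *)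

From HB Require Import structures.
From mathcomp Require Import all_boot all_order all_algebra.
From mathcomp Require Import all_classical all_reals all_analysis.
Set Implicit Arguments. Unset Strict Implicit. Unset Printing Implicit Defensive.
Import Order.TTheory GRing.Theory Num.Theory.
Import numFieldNormedType.Exports.
Local Open Scope classical_set_scope.
Local Open Scope ring_scope.

(* Together with completeness of V (completeNormedModType), V is a real
   Hilbert space. *)
Definition is_inner_product (R : realType) (V : normedModType R)
    (ip : V -> V -> R) : Prop :=
  [/\ (forall (a : R) (u v w : V), ip (a *: u + v) w = a * ip u w + ip v w),
      (forall u v : V, ip u v = ip v u)
    & (forall v : V, `|v| = Num.sqrt (ip v v))].

Definition compact_operator (R : realType) (V H : normedModType R)
    (g : V -> H) : Prop :=
  forall A : set V, bounded_set A -> compact (closure (g @` A)).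

Definition is_eigenvalue (R : realType) (V H : normedModType R)
    (ipV : V -> V -> R) (ipH : H -> H -> R) (g : V -> H) (lam : R) : Prop :=
  exists2 u : V, u != 0 & forall v : V, ipV u v = lam * ipH (g u) (g v).

Definition is_smallest_bound (R : realType) (V H : normedModType R)
    (g : V -> H) (C : R) : Prop :=
  (forall v : V, `|g v| <= C * `|v|) /\
  (forall C' : R, (forall v : V, `|g v| <= C' * `|v|) -> C <= C').

From HB Require Import structures.
From mathcomp Require Import all_boot all_order all_algebra.
From mathcomp Require Import all_classical all_reals all_analysis.
From mathcomp Require Import ring lra.
Import Order.TTheory GRing.Theory Num.Theory.
Import numFieldNormedType.Exports.
Local Open Scope classical_set_scope.
Local Open Scope ring_scope.
Set Implicit Arguments. Unset Strict Implicit. Unset Printing Implicit Defensive.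

(* The Gram operator [K] of [gam], [(K u, v)_V = (gam u, gam v)_H], is compact
   and self-adjoint, and [1/k] is an eigenvalue of the problem for every
   eigenvalue [k <> 0] of [K].  Instead of a spectral decomposition we use a
   variational principle: a bounded symmetric form dominated by [|gam u|^2]
   attains the supremum of its Rayleigh quotient, at an eigenvector.  For the
   form [(gam u, gam v)_H] this gives [C_gam = 1/sqrt lambda_1].  For the form
   [beta (gam u, gam v)_H - delta (K u, K v)_V] with
   [beta = lambda_1^2 + lambda_*^2] and [delta = lambda_1 lambda_*^2], an
   eigenvector of value [sigma] produces an eigenvector of [K] whose eigenvalue
   [k] solves [delta k^2 - beta k + sigma = 0], and the separation hypothesis
   forces [sigma <= lambda_1].  At [u_*] this bound reads
   [(lambda_* - lambda_1)^2 |gam u_*|^2 <= lambda_1 |w|^2]; combined with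
   [|w| <= A + B / sqrt lambda_1] it places [sqrt lambda_1] above the positive
   root [X_2] of [X^2 + alpha X - (lambda_* - beta)]. *)

Lemma sqr_le_norm (R : realDomainType) (x y : R) : `|x| <= y -> x ^+ 2 <= y ^+ 2.
Proof.
move=> xy; rewrite -real_normK ?num_real // !expr2.
by apply: ler_pM => //; apply: le_trans xy.
Qed.

Lemma le_of_sqr_le (R : realDomainType) (x y : R) :
  0 <= y -> x ^+ 2 <= y ^+ 2 -> x <= y.
Proof.
move=> y_ge0 xy; have [x_ge0|/ltW x_le0] := lerP 0 x; last exact: le_trans x_le0 y_ge0.
by rewrite -(ler_pXn2r (n := 2)) ?nnegrE.
Qed.

Section SymmetricBilinear.
Variables (R : realFieldType) (V : lmodType R).

Definition symmetric_bilinear (b : V -> V -> R) :=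
  (forall (a : R) (u v w : V), b (a *: u + v) w = a * b u w + b v w) /\
  (forall u v, b u v = b v u).

Variable b : V -> V -> R.
Hypothesis hb : symmetric_bilinear b.

Lemma bilDl u v w : b (u + v) w = b u w + b v w.
Proof. by have := hb.1 1 u v w; rewrite scale1r mul1r. Qed.

Lemma bil0l w : b 0 w = 0.
Proof. by apply/(addrI (b 0 w)); rewrite -bilDl !addr0. Qed.

Lemma bilZl a u w : b (a *: u) w = a * b u w.
Proof. by have := hb.1 a u 0 w; rewrite addr0 bil0l addr0. Qed.

Lemma bilNl u w : b (- u) w = - b u w.
Proof. by rewrite -scaleN1r bilZl mulN1r. Qed.

Lemma bilBl u v w : b (u - v) w = b u w - b v w.
Proof. by rewrite bilDl bilNl. Qed.

Lemma bilDr u v w : b w (u + v) = b w u + b w v.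
Proof. by rewrite hb.2 bilDl !(hb.2 w). Qed.

Lemma bilZr a u w : b w (a *: u) = a * b w u.
Proof. by rewrite hb.2 bilZl (hb.2 w). Qed.

Lemma bilBr u v w : b w (u - v) = b w u - b w v.
Proof. by rewrite hb.2 bilBl !(hb.2 w). Qed.

Lemma quadratic_ge0_discr (A B C : R) : 0 <= C ->
  (forall t, 0 <= A + 2 * t * B + t ^+ 2 * C) -> B ^+ 2 <= A * C.
Proof.
move=> C0 hq; have [C_eq0|Cn0] := eqVneq C 0.
  subst C; have [->|Bn0] := eqVneq B 0; first by rewrite expr0n mulr0.
  have := hq (- (A + 1) / (2 * B)).
  have -> : 2 * (- (A + 1) / (2 * B)) * B = - (A + 1) by field.
  by rewrite !mulr0; lra.
have Cgt0 : 0 < C by rewrite lt_def Cn0 C0.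
have := hq (- B / C).
have -> : A + 2 * (- B / C) * B + (- B / C) ^+ 2 * C = A - B ^+ 2 / C by field.
by rewrite subr_ge0 ler_pdivrMr.
Qed.

Hypothesis b_psd : forall u, 0 <= b u u.

Lemma bil_CauchySchwarz u v : b u v ^+ 2 <= b u u * b v v.
Proof.
apply: quadratic_ge0_discr => // t; have := b_psd (u + t *: v).
by rewrite !bilDl !bilDr !bilZl !bilZr (hb.2 v u); congr (_ <= _); ring.
Qed.

Lemma bil_kernel v : b v v = 0 -> forall u, b v u = 0.
Proof.
move=> bv0 u; have := bil_CauchySchwarz v u; rewrite bv0 mul0r => le0.
by apply/eqP; rewrite -sqrf_eq0 eq_le le0 sqr_ge0.
Qed.

Lemma bil_parallelogram_le u v : b (u - v) (u - v) <= 2 * b u u + 2 * b v v.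
Proof.
have := b_psd (u + v); rewrite !bilBl !bilDl !bilBr !bilDr (hb.2 v u); lra.
Qed.

End SymmetricBilinear.

Section InnerProduct.
Variables (R : realType) (V : normedModType R) (ip : V -> V -> R).
Hypothesis hip : is_inner_product ip.

Lemma ip_bilinear : symmetric_bilinear ip.
Proof. by case: hip. Qed.

Lemma ip_ge0 v : 0 <= ip v v.
Proof.
case: hip => _ _ normE; rewrite leNgt; apply/negP => ltv0.
have /eqP : `|v| = 0 by rewrite normE ltr0_sqrtr.
by rewrite normr_eq0 => /eqP v0; move: ltv0; rewrite v0 (bil0l ip_bilinear) ltxx.
Qed.

Lemma ip_norm v : ip v v = `|v| ^+ 2.
Proof. by case: hip => _ _ ->; rewrite sqr_sqrtr // ip_ge0. Qed.

Lemma ip_CauchySchwarz u v : `|ip u v| <= `|u| * `|v|.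
Proof.
rewrite -(@ler_pXn2r _ 2) ?nnegrE ?mulr_ge0 // real_normK ?num_real // exprMn.
by rewrite -!ip_norm (bil_CauchySchwarz ip_bilinear ip_ge0).
Qed.

End InnerProduct.

Lemma linearB_fun (R : ringType) (U W : lmodType R) (f : U -> W) :
  linear f -> forall u v, f (u - v) = f u - f v.
Proof. by move=> f_lin u v; rewrite addrC -scaleN1r f_lin scaleN1r addrC. Qed.

Lemma compact_operator_cluster (R : realType) (V H : normedModType R)
    (gam : V -> H) (A : set V) (vs : nat -> V) :
  compact_operator gam -> bounded_set A -> (forall n, A (vs n)) ->
  exists h, forall (eps : R) (N : nat), 0 < eps ->
    exists2 n, (N <= n)%N & `|h - gam (vs n)| < eps.
Proof.
move=> gam_comp bndA Avs.
pose F := (fun n => gam (vs n)) @ \oo.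
have FA : F (closure (gam @` A)).
  by rewrite /F /fmap /=; apply: filterE => n; apply: subset_closure; exists (vs n).
have [h [_ clh]] := gam_comp A bndA F _ FA.
exists h => eps N eps_gt0.
have [|_ [[n Nn <-] hn]] :=
  clh [set gam (vs n) | n in [set n | (N <= n)%N]] (ball h eps) _
      (nbhsx_ballx h eps eps_gt0).
  by apply: filterS (nbhs_infty_ge N) => n Nn; exists n.
by exists n => //; move: hn; rewrite -ball_normE.
Qed.

Section RayleighSup.
Variables (R : realType) (V : completeNormedModType R) (H : normedModType R).
Variables (ipV : V -> V -> R) (gam : V -> H).
Hypothesis hipV : is_inner_product ipV.
Hypothesis gam_lin : linear gam.
Hypothesis gam_comp : compact_operator gam.
Variables (b : V -> V -> R) (M L : R).
Hypothesis hb : symmetric_bilinear b.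
Hypothesis b_bounded : forall u, `|b u u| <= M * `|u| ^+ 2.
Hypothesis b_dominated : forall u, b u u <= L * `|gam u| ^+ 2.

Definition form_sup := sup [set b u u | u in [set u : V | `|u| <= 1]].

Lemma form_has_sup : has_sup [set b u u | u in [set u : V | `|u| <= 1]].
Proof.
split; first by exists (b 0 0); apply: imageP; rewrite /= normr0.
exists `|M| => _ [u u_le1 <-].
have u2_le1 : `|u| ^+ 2 <= 1 by rewrite expr_le1.
have M_le : M * `|u| ^+ 2 <= `|M| * `|u| ^+ 2 by rewrite ler_wpM2r ?ler_norm.
have := ler_piMr (normr_ge0 M) u2_le1.
have := b_bounded u; have := ler_norm (b u u); lra.
Qed.

Lemma form_le_sup u : b u u <= form_sup * `|u| ^+ 2.
Proof.
have [->|un0] := eqVneq u 0; first by rewrite (bil0l hb) normr0 expr0n mulr0.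
set n := `|u|; have n_gt0 : 0 < n by rewrite normr_gt0.
have : b (n^-1 *: u) (n^-1 *: u) <= form_sup.
  apply: (sup_upper_bound form_has_sup); apply: imageP.
  by rewrite /= normrZ gtr0_norm ?invr_gt0 // mulVf ?gt_eqF.
by rewrite (bilZl hb) (bilZr hb) mulrA -expr2 exprVn ler_pdivrMl ?exprn_gt0 // mulrC.
Qed.

Lemma form_sup_ge0 : 0 <= form_sup.
Proof.
rewrite -(bil0l hb 0); apply: (sup_upper_bound form_has_sup).
by apply: imageP; rewrite /= normr0.
Qed.

Lemma form_sup_gt0 u0 : 0 < b u0 u0 -> 0 < form_sup.
Proof.
move=> bu0; have := lt_le_trans bu0 (form_le_sup u0).
by rewrite pmulr_lgt0 // exprn_gt0 // normr_gt0; apply: contraTneq bu0 => ->;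
  rewrite (bil0l hb) ltxx.
Qed.

Let e (k : nat) : R := k.+1%:R^-1.

Let e_gt0 k : 0 < e k. Proof. by rewrite invr_gt0 ltr0n. Qed.

Let e_le1 k : e k <= 1.
Proof. by rewrite invr_le1 ?ler1n ?ltr0n // unitfE pnatr_eq0. Qed.

Let e_le m n : (m <= n)%N -> e n <= e m.
Proof. by move=> mn; rewrite lef_pV2 ?posrE ?ltr0n // ler_nat ltnS. Qed.

Lemma maximizing_sequence : exists (us : nat -> V) (h : H), forall k,
  [/\ `|us k| <= 1, form_sup - e k < b (us k) (us k) & `|h - gam (us k)| < e k].
Proof.
have /choice [vs hvs] : forall n, exists u, `|u| <= 1 /\ form_sup - e n < b u u.
  move=> n; have [_ [u u_le1 <-] hu] := sup_adherent (e_gt0 n) form_has_sup.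
  by exists u.
have ball_bounded : bounded_set [set u : V | `|u| <= 1].
  exists 1; split; first exact: num_real.
  by move=> r r_gt1 u /= /le_trans; apply; apply: ltW.
have [h hcl] := compact_operator_cluster gam_comp ball_bounded (fun n => (hvs n).1).
have /choice [us hus] : forall k, exists u,
    [/\ `|u| <= 1, form_sup - e k < b u u & `|h - gam u| < e k].
  move=> k; have [n kn hn] := hcl _ k (e_gt0 k).
  exists (vs n); split => //; first exact: (hvs n).1.
  by apply: le_lt_trans (hvs n).2; rewrite lerD2l lerN2 e_le.
by exists us, h.
Qed.

(* [defect] is positive semidefinite; on a maximizing sequence it tends to 0,
   which together with the convergence of the images under [gam] makes the
   sequence Cauchy, and it vanishes at the limit. *)
Let defect u x := form_sup * ipV u x - b u x.

Let defect_bilinear : symmetric_bilinear defect.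
Proof.
have [ipVl ipVC] := ip_bilinear hipV.
split=> [a u v w|u v]; first by rewrite /defect ipVl hb.1; ring.
by rewrite /defect ipVC hb.2.
Qed.

Let defect_ge0 u : 0 <= defect u u.
Proof. by rewrite /defect ip_norm // subr_ge0 form_le_sup. Qed.

Let defect_le u : defect u u <= (form_sup + `|M|) * `|u| ^+ 2.
Proof.
rewrite /defect ip_norm // mulrDl lerD2l.
have := b_bounded u; have := ler_norm (- b u u); rewrite normrN.
have : M * `|u| ^+ 2 <= `|M| * `|u| ^+ 2 by rewrite ler_wpM2r ?ler_norm.
lra.
Qed.

Section MaximizingSequence.
Variables (us : nat -> V) (h : H).
Hypothesis hus : forall k,
  [/\ `|us k| <= 1, form_sup - e k < b (us k) (us k) & `|h - gam (us k)| < e k].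
Hypothesis sup_gt0 : 0 < form_sup.

Let defect_us k : defect (us k) (us k) < e k.
Proof.
have [us_le1 us_gt _] := hus k; rewrite /defect ip_norm //.
have : form_sup * `|us k| ^+ 2 <= form_sup.
  by rewrite ler_piMr ?form_sup_ge0 ?expr_le1.
lra.
Qed.

Let us_dist i j : form_sup * `|us i - us j| ^+ 2 <= (2 + 2 * `|L|) * (e i + e j).
Proof.
set d := us i - us j.
have gam_d : `|gam d| <= e i + e j.
  have -> : gam d = (h - gam (us j)) - (h - gam (us i)).
    by rewrite /d (linearB_fun gam_lin) opprB [RHS]addrC addrA subrK.
  have [_ _ hi] := hus i; have [_ _ hj] := hus j.
  by apply: le_trans (ler_normB _ _) _; lra.
have e_sum : (e i + e j) ^+ 2 <= 2 * (e i + e j).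
  have := e_gt0 i; have := e_gt0 j; have := e_le1 i; have := e_le1 j.
  rewrite expr2; nra.
have b_d : b d d <= `|L| * (2 * (e i + e j)).
  apply: le_trans (b_dominated d) _; apply: le_trans (ler_wpM2r _ (ler_norm L)) _.
    exact: exprn_ge0.
  apply: ler_wpM2l => //; apply: le_trans e_sum.
  by rewrite ler_pXn2r ?nnegrE // addr_ge0 // ltW.
have defect_d : defect d d <= 2 * e i + 2 * e j.
  have := bil_parallelogram_le defect_bilinear defect_ge0 (us i) (us j).
  have := defect_us i; have := defect_us j; lra.
have -> : form_sup * `|d| ^+ 2 = defect d d + b d d by rewrite /defect ip_norm //; ring.
lra.
Qed.

Let us_cauchy : cauchy (us @ \oo).
Proof.
apply: cauchy_exP => eps eps_gt0.
pose c := 4 + 4 * `|L|; have c_gt0 : 0 < c by rewrite /c; have := normr_ge0 L; lra.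
have del_gt0 : 0 < form_sup * eps ^+ 2 / c by rewrite divr_gt0 ?mulr_gt0 ?exprn_gt0.
have [N eN] := filter_ex (near_infty_natSinv_lt (PosNum del_gt0)).
exists (us N); apply: filterS (nbhs_infty_ge N) => j Nj /=.
rewrite -ball_normE /= -(@ltr_pXn2r _ 2) ?nnegrE ?normr_ge0 ?(ltW eps_gt0) //.
rewrite -(ltr_pM2l sup_gt0).
apply: le_lt_trans (us_dist N j) _.
have {eN} : c * e N < form_sup * eps ^+ 2.
  by move: eN; rewrite /= ltr_pdivlMr // mulrC.
have := e_le Nj; have := normr_ge0 L; rewrite /c; nra.
Qed.

Let v := lim (us @ \oo).

Let us_near_lim eps : 0 < eps -> exists k, `|v - us k| < eps /\ e k < eps.
Proof.
move=> eps_gt0.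
have near_v : \forall k \near \oo, `|v - us k| < eps.
  have : cvg (us @ \oo) by apply: cauchy_cvg.
  by move/cvgrPdist_lt; apply.
have [k []] := filter_ex (filterI near_v (near_infty_natSinv_lt (PosNum eps_gt0))).
by exists k.
Qed.

Let defect_lim : defect v v = 0.
Proof.
apply/eqP; rewrite eq_le defect_ge0 andbT; apply/ler_addgt0Pr => eps eps_gt0.
pose c := 2 + 2 * (form_sup + `|M|).
have c_gt0 : 0 < c by rewrite /c; have := normr_ge0 M; have := form_sup_ge0; lra.
pose del := Num.min 1 (eps / c).
have del_gt0 : 0 < del by rewrite lt_min ltr01 divr_gt0.
have c_del : c * del <= eps by rewrite -ler_pdivlMl // ge_min mulrC lexx orbT.
have [k [near_k ek]] := us_near_lim del_gt0.
have dist_k : `|us k - v| ^+ 2 <= del.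
  have : del <= 1 by rewrite ge_min lexx.
  by rewrite distrC; have := normr_ge0 (v - us k); nra.
have := bil_parallelogram_le defect_bilinear defect_ge0 (us k) (us k - v).
have -> : us k - (us k - v) = v by rewrite opprB addrC subrK.
have := defect_le (us k - v); have := defect_us k.
have : (form_sup + `|M|) * `|us k - v| ^+ 2 <= (form_sup + `|M|) * del.
  by rewrite ler_wpM2l // addr_ge0 ?form_sup_ge0.
rewrite /c in c_del; lra.
Qed.

Let lim_neq0 : v != 0.
Proof.
apply/eqP => v0; pose del := Num.min (1 / 2) (form_sup / 4).
have del_gt0 : 0 < del by rewrite lt_min !divr_gt0.
have [k [near_k ek]] := us_near_lim del_gt0.
rewrite v0 sub0r normrN in near_k.
have [_ us_gt _] := hus k.
have : `|us k| ^+ 2 <= 1 / 4.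
  have : del <= 1 / 2 by rewrite ge_min lexx.
  have := normr_ge0 (us k); nra.
have : del <= form_sup / 4 by rewrite ge_min lexx orbT.
have := form_le_sup (us k); nra.
Qed.

Lemma maximizing_sequence_limit :
  exists2 v, v != 0 & forall x, b v x = form_sup * ipV v x.
Proof.
exists v => // x; have := bil_kernel defect_bilinear defect_ge0 defect_lim x.
by rewrite /defect; lra.
Qed.

End MaximizingSequence.

Lemma form_sup_attained u0 : 0 < b u0 u0 ->
  exists2 v, v != 0 & forall x, b v x = form_sup * ipV v x.
Proof.
move=> bu0; have [us [h hus]] := maximizing_sequence.
exact: maximizing_sequence_limit hus (form_sup_gt0 bu0).
Qed.

End RayleighSup.

Lemma dominated_functional_repr (R : realType) (V : completeNormedModType R)
    (H : normedModType R) (ipV : V -> V -> R) (gam : V -> H) (f : V -> R) (C c : R) :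
  is_inner_product ipV -> linear gam -> compact_operator gam ->
  (forall v, `|gam v| <= C * `|v|) ->
  (forall a x y, f (a *: x + y) = a * f x + f y) ->
  (forall x, `|f x| <= c * `|gam x|) ->
  exists z, forall x, ipV z x = f x.
Proof.
move=> hipV gam_lin gam_comp gam_bound f_lin f_dom.
have [f0|/existsNP [x0 fx0]] := pselect (forall x, f x = 0).
  by exists 0 => x; rewrite (bil0l (ip_bilinear hipV)) f0.
(* The maximiser of the rank-one form [f x * f y] is proportional to the
   representative. *)
pose b x y := f x * f y.
have hb : symmetric_bilinear b.
  by split=> [a x y z|x y]; rewrite /b ?f_lin 1?mulrC //; ring.
have b_dom x : b x x <= c ^+ 2 * `|gam x| ^+ 2.
  by rewrite /b -expr2 -exprMn sqr_le_norm.
have b_bnd x : `|b x x| <= c ^+ 2 * C ^+ 2 * `|x| ^+ 2.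
  rewrite ger0_norm /b -?expr2 ?sqr_ge0 // -mulrA -exprMn.
  apply: le_trans (b_dom x) _; rewrite ler_wpM2l ?sqr_ge0 // sqr_le_norm //.
  by rewrite normr_id.
have bx0 : 0 < b x0 x0 by rewrite /b -expr2 exprn_even_gt0 //; apply/eqP.
have sig_gt0 := form_sup_gt0 hb b_bnd bx0.
have [v v_neq0 hv] := form_sup_attained hipV gam_lin gam_comp hb b_bnd b_dom bx0.
have fv_neq0 : f v != 0.
  apply/eqP => fv0; have := hv v; rewrite /b fv0 mul0r (ip_norm hipV) => /esym/eqP.
  by rewrite mulf_eq0 gt_eqF //= sqrf_eq0 normr_eq0 (negPf v_neq0).
exists ((form_sup b / f v) *: v) => x; rewrite (bilZl (ip_bilinear hipV)).
by apply: (mulfI fv_neq0); rewrite -[RHS]/(b v x) hv; field.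
Qed.

(* For an eigenvector [v] of [bet K - del K^2] with eigenvalue [sig], take
   [t = (K v, v)], [s = |K v|^2], [c = |v|^2]: then [sig] lies below the
   maximum [bet^2 / (4 del)] of [bet k - del k^2]. *)
Lemma quadratic_value_le_discr (R : realFieldType) (bet del sig t s c : R) :
  0 < del -> 0 < c -> t ^+ 2 <= s * c -> bet * t - del * s = sig * c ->
  4 * del * sig <= bet ^+ 2.
Proof.
move=> del_gt0 c_gt0 cs val.
have : del * t ^+ 2 <= del * (s * c) by rewrite ler_wpM2l // ltW.
have -> : del * (s * c) = bet * t * c - sig * c ^+ 2.
  have del_s : del * s = bet * t - sig * c by rewrite -val; ring.
  by rewrite mulrA del_s; ring.
have : 0 <= (2 * del * t - bet * c) ^+ 2 := sqr_ge0 _.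
have : 0 < c ^+ 2 by rewrite exprn_gt0.
nra.
Qed.

Lemma separated_eigenvalue_bound (R : realFieldType) (lam1 lamstar mu : R) :
  0 < lam1 -> lam1 <= mu ->
  `|(lam1 - lamstar) / lam1| <= `|(mu - lamstar) / mu| ->
  (lam1 ^+ 2 + lamstar ^+ 2) / mu - lam1 * lamstar ^+ 2 / mu ^+ 2
    <= lam1.
Proof.
move=> lam1_gt0 lam1_mu sep.
have mu_gt0 : 0 < mu := lt_le_trans lam1_gt0 lam1_mu.
set k := mu^-1; have k_gt0 : 0 < k by rewrite invr_gt0.
have k_le : k <= lam1^-1 by rewrite lef_pV2.
have {}sep : (lamstar - lam1) ^+ 2 / lam1 <= lam1 * (1 - lamstar * k) ^+ 2.
  have -> : (lamstar - lam1) ^+ 2 / lam1 = lam1 * ((lam1 - lamstar) / lam1) ^+ 2.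
    by field; rewrite gt_eqF.
  have -> : 1 - lamstar * k = (mu - lamstar) / mu by rewrite /k; field; rewrite gt_eqF.
  rewrite ler_pM2l // -[X in _ <= X]real_normK ?num_real //.
  exact: sqr_le_norm.
have : (lamstar - lam1) ^+ 2 * k <= (lamstar - lam1) ^+ 2 / lam1.
  by rewrite ler_wpM2l ?sqr_ge0.
have -> : (lam1 ^+ 2 + lamstar ^+ 2) / mu - lam1 * lamstar ^+ 2 / mu ^+ 2
  = lam1 - lam1 * (1 - lamstar * k) ^+ 2 + (lamstar - lam1) ^+ 2 * k.
  by rewrite /k; field; rewrite gt_eqF.
lra.
Qed.

Lemma quadratic_pos_root_le (R : rcfType) (alpha beta lamstar m : R) :
  0 <= alpha -> beta < lamstar -> 0 < m -> lamstar - m ^+ 2 <= m * alpha + beta ->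
  let X2 := (- alpha + Num.sqrt (alpha ^+ 2 + 4 * (lamstar - beta))) / 2 in
  0 < X2 /\ X2 <= m.
Proof.
move=> alpha_ge0 beta_lt m_gt0 m_root /=.
have disc_ge0 : 0 <= alpha ^+ 2 + 4 * (lamstar - beta) by have := sqr_ge0 alpha; lra.
have root2 := sqr_sqrtr disc_ge0.
have root_ge0 := sqrtr_ge0 (alpha ^+ 2 + 4 * (lamstar - beta)).
set r := Num.sqrt _ in root2 root_ge0 *.
have alpha_lt : alpha < r.
  by rewrite -(ltr_pXn2r (n := 2)) ?nnegrE // root2; lra.
have r_le : r <= alpha + 2 * m.
  rewrite -(ler_pXn2r (n := 2)) ?nnegrE //; last by lra.
  by rewrite root2; nra.
split; lra.
Qed.

Lemma enclosure_of_residual (R : rcfType) (lam1 lamstar Cg A B a w : R) :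
  0 < lam1 -> Cg = (Num.sqrt lam1)^-1 -> 0 <= A -> 0 <= B -> 0 < a -> 0 <= w ->
  B < lamstar * a -> w <= A + Cg * B ->
  (lamstar - lam1) ^+ 2 * a ^+ 2 <= lam1 * w ^+ 2 ->
  let alpha := A / a in
  let beta := B / a in
  let X2 := (- alpha + Num.sqrt (alpha ^+ 2 + 4 * (lamstar - beta))) / 2 in
  X2 ^+ 2 <= lam1 /\ Cg <= 1 / X2.
Proof.
move=> lam1_gt0 CgE A_ge0 B_ge0 a_gt0 w_ge0 B_lt w_le res alpha beta X2.
set m := Num.sqrt lam1 in CgE.
have m_gt0 : 0 < m by rewrite sqrtr_gt0.
have m2 : m ^+ 2 = lam1 by rewrite sqr_sqrtr ?ltW.
have res_m : (lamstar - lam1) * a <= m * A + B.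
  have : (lamstar - lam1) * a <= m * w.
    apply: le_of_sqr_le; first exact: mulr_ge0 (ltW m_gt0) w_ge0.
    by rewrite !exprMn m2.
  have : m * w <= m * A + B.
    have mCg : m * Cg = 1 by rewrite CgE mulfV ?gt_eqF.
    have := ler_wpM2l (ltW m_gt0) w_le.
    by rewrite mulrDr mulrA mCg mul1r.
  lra.
have alpha_ge0 : 0 <= alpha by rewrite /alpha divr_ge0 // ltW.
have beta_lt : beta < lamstar by rewrite /beta ltr_pdivrMr // mulrC.
have m_root : lamstar - m ^+ 2 <= m * alpha + beta.
  rewrite -(ler_pM2r a_gt0) m2.
  have -> : (m * alpha + beta) * a = m * A + B by rewrite /alpha /beta; field; rewrite gt_eqF.
  lra.
have [X2_gt0 X2_le] := quadratic_pos_root_le alpha_ge0 beta_lt m_gt0 m_root.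
have X2_ge0 : 0 <= X2 := ltW X2_gt0.
split; first by rewrite -m2; apply: sqr_le_norm; rewrite ger0_norm.
by rewrite CgE div1r lef_pV2 ?posrE.
Qed.

Section SpectralEstimate.
Variables (R : realType) (V : completeNormedModType R) (H : normedModType R).
Variables (ipV : V -> V -> R) (ipH : H -> H -> R) (gam : V -> H) (Cg : R).
Hypothesis hipV : is_inner_product ipV.
Hypothesis hipH : is_inner_product ipH.
Hypothesis gam_lin : linear gam.
Hypothesis gam_comp : compact_operator gam.
Hypothesis gam_bound : forall v, `|gam v| <= Cg * `|v|.

Local Notation eigenvalue := (is_eigenvalue ipV ipH gam).

Let sV := ip_bilinear hipV.
Let sH := ip_bilinear hipH.

Let eigenvector_norm lam u : (forall v, ipV u v = lam * ipH (gam u) (gam v)) ->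
  `|u| ^+ 2 = lam * `|gam u| ^+ 2.
Proof. by move=> hu; rewrite -(ip_norm hipV) -(ip_norm hipH) hu. Qed.

Lemma eigenvalue_gt0 lam : eigenvalue lam -> 0 < lam.
Proof.
case=> u u_neq0 /eigenvector_norm normE.
have : 0 < lam * `|gam u| ^+ 2 by rewrite -normE exprn_gt0 ?normr_gt0.
by have := sqr_ge0 `|gam u|; nra.
Qed.

Lemma eigenvalue_mul_sqr_ge1 lam : eigenvalue lam -> 1 <= lam * Cg ^+ 2.
Proof.
move=> eig; have lam_gt0 := eigenvalue_gt0 eig.
case: eig => u u_neq0 /eigenvector_norm normE.
have u_gt0 : 0 < `|u| ^+ 2 by rewrite exprn_gt0 ?normr_gt0.
have gu : `|gam u| ^+ 2 <= Cg ^+ 2 * `|u| ^+ 2.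
  by rewrite -exprMn sqr_le_norm ?normr_id.
by rewrite -(ler_pM2r u_gt0) mul1r -mulrA {1}normE ler_pM2l.
Qed.

Lemma gram_form_sup_eigenvalue lam : eigenvalue lam ->
  exists2 sig, (forall v, `|gam v| ^+ 2 <= sig * `|v| ^+ 2) & eigenvalue sig^-1.
Proof.
move=> eig; have lam_gt0 := eigenvalue_gt0 eig.
case: eig => u u_neq0 /eigenvector_norm normE.
pose b x y := ipH (gam x) (gam y).
have hb : symmetric_bilinear b.
  by split=> [a x y z|x y]; rewrite /b; [rewrite gam_lin sH.1 | rewrite sH.2].
have b_bnd x : `|b x x| <= Cg ^+ 2 * `|x| ^+ 2.
  by rewrite /b ip_norm // ger0_norm ?sqr_ge0 // -exprMn sqr_le_norm ?normr_id.
have b_dom x : b x x <= 1 * `|gam x| ^+ 2 by rewrite /b ip_norm // mul1r.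
have bu : 0 < b u u.
  rewrite /b ip_norm // exprn_gt0 // normr_gt0; apply: contra u_neq0 => /eqP gu0.
  by rewrite -normr_eq0 -sqrf_eq0 normE gu0 normr0 expr0n mulr0.
have sig_gt0 := form_sup_gt0 hb b_bnd bu.
exists (form_sup b) => [v|]; first by rewrite -(ip_norm hipH) (form_le_sup hb b_bnd).
have [v v_neq0 hv] := form_sup_attained hipV gam_lin gam_comp hb b_bnd b_dom bu.
by exists v => // x; rewrite -[ipH _ _]/(b v x) hv mulrA mulVf ?mul1r // gt_eqF.
Qed.

Lemma smallest_bound_first_eigenvalue lam1 : eigenvalue lam1 ->
  (forall lam, eigenvalue lam -> lam1 <= lam) ->
  (forall C, (forall v, `|gam v| <= C * `|v|) -> Cg <= C) ->
  Cg = (Num.sqrt lam1)^-1.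
Proof.
move=> eig1 min1 Cg_min; have lam1_gt0 := eigenvalue_gt0 eig1.
have Cg_ge0 : 0 <= Cg.
  case: eig1 => u u_neq0 _; have u_gt0 : 0 < `|u| by rewrite normr_gt0.
  rewrite -(pmulr_lge0 _ u_gt0).
  exact: le_trans (normr_ge0 _) (gam_bound u).
suff Cg2 : Cg ^+ 2 = lam1^-1 by rewrite -sqrtrV ?ltW // -Cg2 sqrtr_sqr ger0_norm.
apply: (mulfI (lt0r_neq0 lam1_gt0)); rewrite mulfV ?lt0r_neq0 //.
apply/eqP; rewrite eq_le eigenvalue_mul_sqr_ge1 // andbT.
have [sig gam_sig eig_sig] := gram_form_sup_eigenvalue eig1.
have sig_gt0 : 0 < sig by rewrite -invr_gt0 (eigenvalue_gt0 eig_sig).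
have : Cg <= Num.sqrt sig.
  apply: Cg_min => v; rewrite -(@ler_pXn2r _ 2) ?nnegrE ?mulr_ge0 ?sqrtr_ge0 //.
  by rewrite exprMn sqr_sqrtr ?(ltW sig_gt0) // gam_sig.
move=> Cg_sig; have {}Cg_sig : Cg ^+ 2 <= sig.
  by rewrite -(sqr_sqrtr (ltW sig_gt0)) sqr_le_norm // ger0_norm.
have := min1 _ eig_sig; rewrite -(ler_pM2r sig_gt0) mulVf ?gt_eqF // => lam1_sig.
by apply: le_trans lam1_sig; rewrite ler_wpM2l // ltW.
Qed.

Lemma gram_operator_exists :
  exists K : V -> V, forall u x, ipV (K u) x = ipH (gam u) (gam x).
Proof.
suff /choice [K hK] : forall u, exists z, forall x, ipV z x = ipH (gam u) (gam x).
  by exists K.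
move=> u.
apply: (dominated_functional_repr (c := `|gam u|) hipV gam_lin gam_comp gam_bound).
  by move=> a x y; rewrite gam_lin (bilDr sH) (bilZr sH).
by move=> x; apply: ip_CauchySchwarz.
Qed.

Section GramOperator.
Variable K : V -> V.
Hypothesis hK : forall u x, ipV (K u) x = ipH (gam u) (gam x).

Lemma gram_sym u x : ipV (K u) x = ipV u (K x).
Proof. by rewrite hK sH.2 -hK sV.2. Qed.

Lemma gram_norm_le x : `|K x| <= Cg ^+ 2 * `|x|.
Proof.
have [->|Kx_neq0] := eqVneq (K x) 0.
  by rewrite normr0 mulr_ge0 ?sqr_ge0.
have Kx_gt0 : 0 < `|K x| by rewrite normr_gt0.
rewrite -(ler_pM2l Kx_gt0) -expr2 -(ip_norm hipV) hK.
apply: le_trans (ler_norm _) _; apply: le_trans (ip_CauchySchwarz hipH _ _) _.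
have -> : `|K x| * (Cg ^+ 2 * `|x|) = (Cg * `|x|) * (Cg * `|K x|) by ring.
by apply: ler_pM => //; apply: gam_bound.
Qed.

Lemma gram_eigenvalue z k : z != 0 -> k != 0 ->
  (forall y, ipV (K z) y = k * ipV z y) -> eigenvalue k^-1.
Proof.
move=> z_neq0 k_neq0 Kz; exists z => // y.
by rewrite -hK Kz mulrA mulVf ?mul1r.
Qed.

Lemma gram_quadratic_eigenvector (bet del sig : R) v : 0 < del -> v != 0 ->
  (forall y, bet * ipV (K v) y - del * ipV (K (K v)) y = sig * ipV v y) ->
  exists z k, [/\ z != 0, del * k ^+ 2 - bet * k + sig = 0
                & forall y, ipV (K z) y = k * ipV z y].
Proof.
move=> del_gt0 v_neq0 hv; have del_neq0 : del != 0 by rewrite gt_eqF.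
have c_gt0 : 0 < ipV v v by rewrite ip_norm // exprn_gt0 ?normr_gt0.
have D_ge0 : 0 <= bet ^+ 2 - 4 * del * sig.
  rewrite subr_ge0; apply: (quadratic_value_le_discr del_gt0 c_gt0).
    exact: bil_CauchySchwarz sV (ip_ge0 hipV) (K v) v.
  by rewrite -(gram_sym (K v) v) hv.
pose S := Num.sqrt (bet ^+ 2 - 4 * del * sig).
have S2 : S ^+ 2 = bet ^+ 2 - 4 * del * sig by exact: sqr_sqrtr.
pose k1 := (bet + S) / (2 * del); pose k2 := (bet - S) / (2 * del).
have bet_sum : bet = del * (k1 + k2) by rewrite /k1 /k2; field.
have sig_prod : sig = del * k1 * k2.
  have -> : del * k1 * k2 = (bet ^+ 2 - S ^+ 2) / (4 * del) by rewrite /k1 /k2; field.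
  by rewrite S2; field.
(* [del K^2 - bet K + sig = del (K - k1) (K - k2)] annihilates [v]. *)
have [Kv_eq|z_neq0] := eqVneq (K v - k2 *: v) 0.
  exists v, k2; split=> // [|y]; first by rewrite bet_sum sig_prod; ring.
  by rewrite (subr0_eq Kv_eq) (bilZl sV).
exists (K v - k2 *: v), k1; split=> // [|y]; first by rewrite bet_sum sig_prod; ring.
have -> : K v - k2 *: v = (- k2) *: v + K v by rewrite addrC scaleNr.
rewrite hK gam_lin sH.1 -!hK (bilDl sV) !(bilZl sV).
apply: (mulfI del_neq0).
by have := hv y; rewrite bet_sum sig_prod; lra.
Qed.

Section ShiftedGram.
Variables lam1 lamstar : R.
Hypothesis lam1_gt0 : 0 < lam1.
Hypothesis lam1_min : forall lam, eigenvalue lam -> lam1 <= lam.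
Hypothesis lam1_sep : forall lam, eigenvalue lam ->
  `|(lam1 - lamstar) / lam1| <= `|(lam - lamstar) / lam|.
Hypothesis lamstar_neq0 : lamstar != 0.

Let bet := lam1 ^+ 2 + lamstar ^+ 2.
Let del := lam1 * lamstar ^+ 2.

Lemma shifted_gram_le u :
  bet * `|gam u| ^+ 2 - del * `|K u| ^+ 2 <= lam1 * `|u| ^+ 2.
Proof.
rewrite leNgt; apply/negP => hu.
have del_gt0 : 0 < del by rewrite /del mulr_gt0 // exprn_even_gt0.
have bet_ge0 : 0 <= bet by rewrite addr_ge0 ?sqr_ge0.
pose b x y := bet * ipH (gam x) (gam y) - del * ipV (K x) (K y).
have hb : symmetric_bilinear b.
  split=> [a x y z|x y]; rewrite /b; last by rewrite sH.2 sV.2.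
  by rewrite !hK gam_lin !sH.1; ring.
have b_norm x : b x x = bet * `|gam x| ^+ 2 - del * `|K x| ^+ 2.
  by rewrite /b !ip_norm.
have b_bnd x : `|b x x| <= (bet * Cg ^+ 2 + del * (Cg ^+ 2) ^+ 2) * `|x| ^+ 2.
  have gx : bet * `|gam x| ^+ 2 <= bet * (Cg * `|x|) ^+ 2.
    by apply: ler_wpM2l => //; apply: sqr_le_norm; rewrite normr_id.
  have Kx : del * `|K x| ^+ 2 <= del * (Cg ^+ 2 * `|x|) ^+ 2.
    apply: ler_wpM2l; first exact: ltW.
    by apply: sqr_le_norm; rewrite normr_id gram_norm_le.
  have := mulr_ge0 bet_ge0 (sqr_ge0 `|gam x|).
  have := mulr_ge0 (ltW del_gt0) (sqr_ge0 `|K x|).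
  by rewrite b_norm ler_norml => ? ?; apply/andP; split; lra.
have b_dom x : b x x <= bet * `|gam x| ^+ 2.
  by rewrite b_norm gerBl // mulr_ge0 ?sqr_ge0 // ltW.
have bu_gt0 : 0 < b u u.
  by rewrite b_norm; apply: le_lt_trans hu; rewrite mulr_ge0 ?sqr_ge0 // ltW.
have [v v_neq0 hv] := form_sup_attained hipV gam_lin gam_comp hb b_bnd b_dom bu_gt0.
have lam1_sig : lam1 < form_sup b.
  have u_gt0 : 0 < `|u| ^+ 2.
    rewrite exprn_gt0 // normr_gt0; apply: contraTneq bu_gt0 => ->.
    by rewrite (bil0l hb) ltxx.
  rewrite -(ltr_pM2r u_gt0); apply: lt_le_trans hu _.
  by rewrite -b_norm (form_le_sup hb b_bnd).
have Kv_eq y : bet * ipV (K v) y - del * ipV (K (K v)) y = form_sup b * ipV v y.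
  by rewrite -hv /b hK (gram_sym (K v) y).
have [z [k [z_neq0 root Kz]]] :=
  gram_quadratic_eigenvector del_gt0 v_neq0 Kv_eq.
have k_neq0 : k != 0.
  apply: contraTneq lam1_sig => k0; move: root; rewrite k0 expr0n /= !mulr0 subr0 add0r.
  by move=> ->; rewrite -leNgt ltW.
have eig := gram_eigenvalue z_neq0 k_neq0 Kz.
have := separated_eigenvalue_bound lam1_gt0 (lam1_min eig) (lam1_sep eig).
rewrite exprVn !invrK -/bet -/del; lra.
Qed.

Lemma residual_norm_bound ustar w :
  (forall v, ipV w v = ipV ustar v - lamstar * ipH (gam ustar) (gam v)) ->
  (lamstar - lam1) ^+ 2 * `|gam ustar| ^+ 2 <= lam1 * `|w| ^+ 2.
Proof.
move=> hw.
have w_ustar : ipV w ustar = `|ustar| ^+ 2 - lamstar * `|gam ustar| ^+ 2.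
  by rewrite hw !ip_norm.
have w_Kustar : ipV w (K ustar) = `|gam ustar| ^+ 2 - lamstar * `|K ustar| ^+ 2.
  rewrite hw -(hK ustar (K ustar)) -[ipV ustar (K ustar)]gram_sym.
  by rewrite hK !ip_norm.
have wE : `|w| ^+ 2
    = `|ustar| ^+ 2 - 2 * lamstar * `|gam ustar| ^+ 2 + lamstar ^+ 2 * `|K ustar| ^+ 2.
  by rewrite -(ip_norm hipV) {1}hw sV.2 w_ustar -hK sV.2 w_Kustar; ring.
have := shifted_gram_le ustar; rewrite wE /bet /del; lra.
Qed.

End ShiftedGram.

End GramOperator.

End SpectralEstimate.

Unset Implicit Arguments.

Theorem theorem3p4 (R : realType)
  (V H : completeNormedModType R)
  (ipV : V -> V -> R) (ipH : H -> H -> R)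
  (hipV : is_inner_product ipV) (hipH : is_inner_product ipH)
  (gam : V -> H) (gam_lin : linear gam) (gam_cont : continuous gam)
  (gam_comp : compact_operator gam)
  (lam1 : R)
  (lam1_eig : is_eigenvalue ipV ipH gam lam1)
  (lam1_min : forall lam, is_eigenvalue ipV ipH gam lam -> lam1 <= lam)
  (Cg : R) (hCg : is_smallest_bound gam Cg)
  (ustar : V) (lamstar : R) (w : V)
  (hw : forall v : V, ipV w v = ipV ustar v - lamstar * ipH (gam ustar) (gam v))
  (hsep : forall lam, is_eigenvalue ipV ipH gam lam ->
     `|(lam1 - lamstar) / lam1| <= `|(lam - lamstar) / lam|)
  (A B : R) (hA : 0 <= A) (hB : 0 <= B)
  (hBl : B < lamstar * `|gam ustar|)
  (hwAB : `|w| <= A + Cg * B) :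
  let alpha := A / `|gam ustar| in
  let beta := B / `|gam ustar| in
  let X2 := (- alpha + Num.sqrt (alpha ^+ 2 + 4 * (lamstar - beta))) / 2 in
  X2 ^+ 2 <= lam1 /\ Cg <= 1 / X2.
Proof.
case: hCg => gam_bound Cg_min.
have lam1_gt0 := eigenvalue_gt0 hipV hipH lam1_eig.
have CgE := smallest_bound_first_eigenvalue hipV hipH gam_lin gam_comp gam_bound
  lam1_eig lam1_min Cg_min.
have gu_gt0 : 0 < `|gam ustar|.
  by rewrite lt0r normr_ge0 andbT; apply: contraTneq hBl => ->; rewrite mulr0 -leNgt.
have lamstar_gt0 : 0 < lamstar by rewrite -(pmulr_lgt0 _ gu_gt0) (le_lt_trans hB).
have [K hK] := gram_operator_exists hipV hipH gam_lin gam_comp gam_bound.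
have res := residual_norm_bound hipV hipH gam_lin gam_comp gam_bound hK lam1_gt0
  lam1_min hsep (lt0r_neq0 lamstar_gt0) hw.
exact: enclosure_of_residual lam1_gt0 CgE hA hB gu_gt0 (normr_ge0 w) hBl hwAB res.
Qed.
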